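(* Let $S$ be a T2R semigroup, with $S=S_0\cup S_1$ as in the definition, and let $b\in S_0$ be such that $|J_b|=2$. Then $S_0J_b\subseteq I(b)$, $J_bS_0\subseteq I(b)$, and either $S_1J_b\subseteq I(b)$ or $S_1J_b=J_b$.
   Context: A semigroup $S$ is a $\Delta$-semigroup if the lattice of all congruences of $S$ is a chain with respect to inclusion. A semigroup $N$ with zero $0$ is nil if every element has some power equal to $0$; non-trivial means having more than one element. A T2R semigroup is a $\Delta$-semigroup $S$ which is the disjoint union of a non-trivial nil ideal $S_0$ (with zero $0$, which is then the zero of $S$) and a subsemigroup $S_1$ which is a two-element right zero semigroup (i.e. $S_1=\{u,v\}$ with $xy=y$ for $x,y\in S_1$). $S^1$ denotes $S$ with an identity $1$ adjoined. For $a\in S$: $J(a)=S^1aS^1$, $J_a=\{s\in S:J(s)=J(a)\}$, $I(a)=J(a)\setminus J_a$. Products of sets are taken elementwise. *)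

From Stdlib Require Import Arith.
Set Implicit Arguments.

Section Semigroups.
Variable T : Type.
Variable mul : T -> T -> T.

Definition associative_op : Prop :=
  forall x y z, mul x (mul y z) = mul (mul x y) z.

Definition is_congruence (rho : T -> T -> Prop) : Prop :=
  (forall x, rho x x) /\
  (forall x y, rho x y -> rho y x) /\
  (forall x y z, rho x y -> rho y z -> rho x z) /\
  (forall x y s, rho x y -> rho (mul s x) (mul s y) /\ rho (mul x s) (mul y s)).

Definition rel_incl (rho sigma : T -> T -> Prop) : Prop :=
  forall x y, rho x y -> sigma x y.

Definition Delta_semigroup : Prop :=
  associative_op /\
  forall rho sigma, is_congruence rho -> is_congruence sigma ->
    rel_incl rho sigma \/ rel_incl sigma rho.

(* npow a n = a^(n+1) *)
Fixpoint npow (a : T) (n : nat) : T :=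
  match n with
  | O => a
  | S k => mul (npow a k) a
  end.

Definition T2R (S0 : T -> Prop) (z u v : T) : Prop :=
  Delta_semigroup /\
  (forall a s, S0 a -> S0 (mul a s) /\ S0 (mul s a)) /\
  S0 z /\ (forall a, S0 a -> mul z a = z /\ mul a z = z) /\
  (forall a, S0 a -> exists n, npow a n = z) /\
  (exists a, S0 a /\ a <> z) /\
  u <> v /\ ~ S0 u /\ ~ S0 v /\
  (forall x, S0 x \/ x = u \/ x = v) /\
  mul u u = u /\ mul u v = v /\ mul v u = u /\ mul v v = v.

(* x ∈ J(a) = S^1 a S^1 *)
Definition inJ (a x : T) : Prop :=
  x = a \/ (exists s, x = mul s a) \/ (exists t, x = mul a t) \/
  (exists s t, x = mul (mul s a) t).

Definition Jclass (a s : T) : Prop := forall x, inJ s x <-> inJ a x.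

Definition inI (a x : T) : Prop := inJ a x /\ ~ Jclass a x.

End Semigroups.

From Stdlib Require Import Classical.
Set Implicit Arguments.
Unset Strict Implicit.

(* Elements of S^1 are represented as [option T] ([None] is the adjoined
   identity), so that x ∈ J(a) reads x = p·a·q with p, q ∈ S^1.
   The key fact is a "sandwich" argument: if x = P·x·Q in S^1
   and P (or Q) is nilpotent, then x = P^n·x·Q^n = 0 for large n.
   Since z ∈ J_b would force J_b = J(z) = {z}, a two-element class J_b avoids
   z, so no c ∈ J_b admits such a nilpotent sandwich.
   - If a ∈ S0 and c, ac ∈ J_b, then c ∈ J(ac) gives c = (p a)·c·q with
     p a ∈ S0 nilpotent; symmetrically for ca.  Every y ∈ J_b is y = p·x·q; p ∈ S0 would yield a nilpotent
     sandwich of x, so y = x·q and hence t y = y: S1 J_b = J_b.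
     Otherwise S1 J_b ⊆ J(b) \ J_b = I(b). *)

Section JClasses.
Variables (T : Type) (mul : T -> T -> T).

Lemma Jclass_inJ b c : Jclass mul b c -> inJ mul b c.
Proof. intros Hc; apply Hc; now left. Qed.

Lemma Jclass_mutual b c y : Jclass mul b c -> Jclass mul b y -> inJ mul y c.
Proof. intros Hc Hy; apply Hy, Jclass_inJ, Hc. Qed.

Lemma Jclass_mul_l b c s : Jclass mul b c -> inJ mul b (mul s c).
Proof. intros Hc; apply Hc; right; left; now exists s. Qed.

Lemma Jclass_mul_r b c s : Jclass mul b c -> inJ mul b (mul c s).
Proof. intros Hc; apply Hc; right; right; left; now exists s. Qed.

End JClasses.

Section Sandwich.
Variables (T : Type) (mul : T -> T -> T) (z : T).
Hypothesis assoc : forall x y w, mul x (mul y w) = mul (mul x y) w.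
Hypothesis zero_l : forall s, mul z s = z.
Hypothesis zero_r : forall s, mul s z = z.

Definition lmul1 (p : option T) (x : T) : T :=
  match p with None => x | Some p => mul p x end.
Definition rmul1 (x : T) (q : option T) : T :=
  match q with None => x | Some q => mul x q end.

Definition omul1 (p q : option T) : option T :=
  match p, q with
  | None, _ => q
  | _, None => p
  | Some p, Some q => Some (mul p q)
  end.

Lemma inJ_S1 a x : inJ mul a x -> exists p q, x = lmul1 p (rmul1 a q).
Proof.
  intros [-> | [[s ->] | [[t ->] | [s [t ->]]]]].
  - now exists None, None.
  - now exists (Some s), None.
  - now exists None, (Some t).
  - exists (Some s), (Some t); symmetry; apply assoc.
Qed.

Lemma sandwich_compose p q p' q' x :
  lmul1 p' (rmul1 (lmul1 p (rmul1 x q)) q') =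
  lmul1 (omul1 p' p) (rmul1 x (omul1 q q')).
Proof. destruct p, q, p', q'; simpl; rewrite ?assoc; reflexivity. Qed.

Lemma npow_succ_l p n : npow mul p (S n) = mul p (npow mul p n).
Proof.
  induction n as [|n IH]; [reflexivity|].
  change (mul (npow mul p (S n)) p = mul p (mul (npow mul p n) p)).
  now rewrite IH, assoc.
Qed.

(* [opow P n] is P^(n+1) in S^1. *)
Definition opow (P : option T) (n : nat) : option T :=
  option_map (fun p => npow mul p n) P.

Lemma sandwich_iter P Q x :
  x = lmul1 P (rmul1 x Q) ->
  forall n, x = lmul1 (opow P n) (rmul1 x (opow Q n)).
Proof.
  intros Hx n; induction n as [|n IH].
  - destruct P, Q; exact Hx.
  - rewrite IH at 1; rewrite Hx at 1.
    rewrite sandwich_compose.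
    destruct P as [p|], Q as [q|]; simpl; try reflexivity;
      now rewrite <- ?npow_succ_l.
Qed.

Definition nil1 (P : option T) : Prop :=
  exists a n, P = Some a /\ npow mul a n = z.

Lemma sandwich_zero P Q x :
  x = lmul1 P (rmul1 x Q) -> nil1 P \/ nil1 Q -> x = z.
Proof.
  intros Hx [[a [n [-> Ha]]] | [a [n [-> Ha]]]];
    rewrite (sandwich_iter Hx n); simpl; rewrite Ha.
  - apply zero_l.
  - rewrite zero_r; destruct P; simpl; auto.
Qed.

Lemma inJ_zero x : inJ mul z x -> x = z.
Proof.
  intros Hx; destruct (inJ_S1 Hx) as [p [q ->]].
  destruct p, q; simpl; rewrite ?zero_l, ?zero_r; reflexivity.
Qed.

Lemma two_element_Jclass_nonzero b c d :
  c <> d -> (forall s, Jclass mul b s <-> (s = c \/ s = d)) ->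
  ~ Jclass mul b z.
Proof.
  intros Hcd Hb Hz.
  assert (Hc : c = z) by (apply inJ_zero, Hz, Jclass_inJ, Hb; auto).
  assert (Hd : d = z) by (apply inJ_zero, Hz, Jclass_inJ, Hb; auto).
  congruence.
Qed.

End Sandwich.

Section T2R.
Variables (T : Type) (mul : T -> T -> T) (S0 : T -> Prop) (z u v : T).
Hypothesis HS : T2R mul S0 z u v.

Definition S1 (t : T) : Prop := t = u \/ t = v.

Lemma T2R_assoc x y w : mul x (mul y w) = mul (mul x y) w.
Proof. exact (proj1 (proj1 HS) x y w). Qed.

Lemma T2R_ideal a s : S0 a -> S0 (mul a s) /\ S0 (mul s a).
Proof. exact (proj1 (proj2 HS) a s). Qed.

Lemma T2R_cover x : S0 x \/ S1 x.
Proof.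
  destruct HS as [_ [_ [_ [_ [_ [_ [_ [_ [_ [Hcov _]]]]]]]]]].
  destruct (Hcov x) as [? | ?]; [left | right]; auto.
Qed.

Lemma T2R_right_zero t s : S1 t -> S1 s -> mul t s = s.
Proof.
  destruct HS as [_ [_ [_ [_ [_ [_ [_ [_ [_ [_ [Huu [Huv [Hvu Hvv]]]]]]]]]]]]].
  intros [-> | ->] [-> | ->]; assumption.
Qed.

Lemma T2R_zero s : mul z s = z /\ mul s z = z.
Proof.
  destruct HS as [_ [_ [Hz0 [Hz _]]]].
  destruct (Hz z Hz0) as [Hzz _].
  split.
  - rewrite <- Hzz at 1; rewrite <- T2R_assoc.
    apply (Hz _ (proj1 (T2R_ideal s Hz0))).
  - rewrite <- Hzz at 1; rewrite T2R_assoc.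
    apply (Hz _ (proj2 (T2R_ideal s Hz0))).
Qed.

Lemma S0_nil1 a : S0 a -> nil1 mul z (Some a).
Proof.
  intros Ha; destruct HS as [_ [_ [_ [_ [Hnil _]]]]].
  destruct (Hnil a Ha) as [n Hn]; now exists a, n.
Qed.

Lemma S0_lmul1 p a : S0 a -> S0 (lmul1 mul p a).
Proof. destruct p; simpl; auto; intros Ha; apply (T2R_ideal _ Ha). Qed.

Lemma S0_rmul1 a q : S0 a -> S0 (rmul1 mul a q).
Proof. destruct q; simpl; auto; intros Ha; apply (T2R_ideal _ Ha). Qed.

Variable b : T.
Hypothesis Jb_nonzero : ~ Jclass mul b z.

Lemma Jclass_no_S0_sandwich c P Q :
  Jclass mul b c -> c = lmul1 mul P (rmul1 mul c Q) ->
  (exists a, P = Some a /\ S0 a) \/ (exists a, Q = Some a /\ S0 a) -> False.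
Proof.
  intros Hc Hsw HPQ.
  assert (Hcz : c = z).
  { apply (sandwich_zero T2R_assoc (fun s => proj1 (T2R_zero s))
             (fun s => proj2 (T2R_zero s)) Hsw).
    destruct HPQ as [[a [-> Ha]] | [a [-> Ha]]];
      [left | right]; now apply S0_nil1. }
  subst c; exact (Jb_nonzero Hc).
Qed.

Lemma S0_Jclass_in_I a c : S0 a -> Jclass mul b c -> inI mul b (mul a c).
Proof.
  intros Ha Hc; split; [now apply Jclass_mul_l|].
  intros Hac; destruct (inJ_S1 T2R_assoc (Jclass_mutual Hc Hac)) as [p [q Hsw]].
  apply (Jclass_no_S0_sandwich (P := Some (lmul1 mul p a)) (Q := q) Hc).
  - rewrite Hsw at 1.
    change (mul a c) with (lmul1 mul (Some a) (rmul1 mul c None)).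
    rewrite sandwich_compose by exact T2R_assoc.
    destruct p, q; reflexivity.
  - left; exists (lmul1 mul p a); split; auto; now apply S0_lmul1.
Qed.

Lemma Jclass_S0_in_I c a : Jclass mul b c -> S0 a -> inI mul b (mul c a).
Proof.
  intros Hc Ha; split; [now apply Jclass_mul_r|].
  intros Hca; destruct (inJ_S1 T2R_assoc (Jclass_mutual Hc Hca)) as [p [q Hsw]].
  apply (Jclass_no_S0_sandwich (P := p) (Q := Some (rmul1 mul a q)) Hc).
  - rewrite Hsw at 1.
    change (mul c a) with (lmul1 mul None (rmul1 mul c (Some a))).
    rewrite sandwich_compose by exact T2R_assoc.
    destruct p, q; reflexivity.
  - right; exists (rmul1 mul a q); split; auto; now apply S0_rmul1.
Qed.

Lemma rmul1_fixed t x q : mul t x = x -> mul t (rmul1 mul x q) = rmul1 mul x q.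
Proof. intros Htx; destruct q as [q|]; simpl; [rewrite T2R_assoc, Htx|]; auto. Qed.

Lemma Jclass_right_translate x y :
  Jclass mul b x -> Jclass mul b y -> (forall t, S1 t -> mul t x = x) ->
  exists q, y = rmul1 mul x q.
Proof.
  intros Hx Hy Hfix.
  destruct (inJ_S1 T2R_assoc (Jclass_mutual Hy Hx)) as [[p|] [q Hyx]]; [|now exists q].
  exists q; destruct (T2R_cover p) as [Hp | Hp].
  - exfalso.
    destruct (inJ_S1 T2R_assoc (Jclass_mutual Hx Hy)) as [p' [q' Hxy]].
    apply (Jclass_no_S0_sandwich (P := Some (lmul1 mul p' p))
             (Q := omul1 mul q q') Hx).
    + rewrite Hxy at 1; rewrite Hyx, sandwich_compose by exact T2R_assoc.
      destruct p'; reflexivity.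
    + left; exists (lmul1 mul p' p); split; auto; now apply S0_lmul1.
  - rewrite Hyx; apply rmul1_fixed, Hfix, Hp.
Qed.

Lemma S1_fixes_Jclass s c :
  S1 s -> Jclass mul b c -> Jclass mul b (mul s c) ->
  forall t y, S1 t -> Jclass mul b y -> mul t y = y.
Proof.
  intros Hs Hc Hsc t y Ht Hy.
  assert (Hfix : forall t, S1 t -> mul t (mul s c) = mul s c).
  { intros t' Ht'; now rewrite T2R_assoc, (T2R_right_zero Ht' Hs). }
  destruct (Jclass_right_translate Hsc Hy Hfix) as [q ->].
  apply rmul1_fixed, Hfix, Ht.
Qed.

Lemma S1_Jclass_dichotomy :
  (forall s c, S1 s -> Jclass mul b c -> inI mul b (mul s c)) \/
  (forall x, (exists s c, S1 s /\ Jclass mul b c /\ x = mul s c)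
             <-> Jclass mul b x).
Proof.
  destruct (classic (exists s c, S1 s /\ Jclass mul b c /\ Jclass mul b (mul s c)))
    as [[s [c [Hs [Hc Hsc]]]] | Hnone].
  - right; intros x; split.
    + intros [s' [c' [Hs' [Hc' ->]]]].
      now rewrite (S1_fixes_Jclass Hs Hc Hsc Hs' Hc').
    + intros Hx; exists u, x; split; [now left|]; split; [exact Hx|].
      symmetry; apply (S1_fixes_Jclass Hs Hc Hsc); [now left | exact Hx].
  - left; intros s c Hs Hc; split; [now apply Jclass_mul_l|].
    intros Hsc; apply Hnone; now exists s, c.
Qed.

End T2R.

Theorem corollary3 (T : Type) (mul : T -> T -> T) (S0 : T -> Prop) (z u v : T)
  (HS : T2R mul S0 z u v) (b : T) (Hb : S0 b)
  (H2 : exists c d, c <> d /\ forall s, Jclass mul b s <-> (s = c \/ s = d)) :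
  (forall a c, S0 a -> Jclass mul b c -> inI mul b (mul a c)) /\
  (forall c a, Jclass mul b c -> S0 a -> inI mul b (mul c a)) /\
  ((forall s c, (s = u \/ s = v) -> Jclass mul b c -> inI mul b (mul s c)) \/
   (forall x, (exists s c, (s = u \/ s = v) /\ Jclass mul b c /\ x = mul s c)
              <-> Jclass mul b x)).
Proof.
  destruct H2 as [c [d [Hcd Hcls]]].
  assert (Hnz : ~ Jclass mul b z).
  { apply (two_element_Jclass_nonzero (T2R_assoc HS) (fun s => proj1 (T2R_zero HS s))
             (fun s => proj2 (T2R_zero HS s)) Hcd Hcls). }
  split; [|split].
  - intros a c' Ha Hc'; exact (S0_Jclass_in_I HS Hnz Ha Hc').
  - intros c' a Hc' Ha; exact (Jclass_S0_in_I HS Hnz Hc' Ha).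
  - exact (S1_Jclass_dichotomy HS Hnz).
Qed.
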